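(* Assume the standing hypotheses described in the context. If $x,y\in\mathbb X$, $\|x-x_0\|\le t$, $\|y-x\|\le s$ and $s+t<R$ (with $s,t\ge 0$), then \[\|F'(x_0)^{-1}E_F(y,x)\|\le e_f(t+s,t),\] and, if $s\neq0$, \[\|F'(x_0)^{-1}E_F(y,x)\|\le\frac12\,\frac{f'(s+t)-f'(t)}{s}\,\|y-x\|^2.\]
   Context: Standing hypotheses: $\mathbb X,\mathbb Y$ are Banach spaces; $B(x,r)$ is the open ball. $R\in\mathbb R$, $C\subseteq\mathbb X$, $F:C\to\mathbb Y$ is continuous and continuously differentiable on $\mathrm{int}(C)$, $x_0\in\mathrm{int}(C)$ with $F'(x_0)$ non-singular, $f:[0,R)\to\mathbb R$ is continuously differentiable, $B(x_0,R)\subseteq C$, $\|F'(x_0)^{-1}[F'(y)-F'(x)]\|\le f'(\|y-x\|+\|x-x_0\|)-f'(\|x-x_0\|)$ for all $x,y\in B(x_0,R)$ with $\|x-x_0\|+\|y-x\|<R$, $\|F'(x_0)^{-1}F(x_0)\|\le f(0)$, and (h1) $f(0)>0$, $f'(0)=-1$; (h2) $f'$ is strictly increasing and convex; (h3) $f(t)<0$ for some $t\in(0,R)$. Linearization errors: $E_F(y,x):=F(y)-[F(x)+F'(x)(y-x)]$ for $x\in B(x_0,R)$, $y\in C$; $e_f(v,t):=f(v)-[f(t)+f'(t)(v-t)]$ for $t,v\in[0,R)$. *)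

From HB Require Import structures.
From mathcomp Require Import all_boot all_order all_algebra.
From mathcomp Require Import all_classical all_reals all_analysis.
Set Implicit Arguments. Unset Strict Implicit. Unset Printing Implicit Defensive.
Import Order.TTheory GRing.Theory Num.Theory.
Import numFieldNormedType.Exports.
Local Open Scope classical_set_scope.
Local Open Scope ring_scope.

Section Defs.
Variable R : realType.

Definition opnorm (X Y : normedModType R) (L : X -> Y) : R :=
  sup [set `|L u| | u in [set u : X | `|u| <= 1]].

Definition C1_on (X Y : normedModType R) (A : set X) (F : X -> Y) : Prop :=
  (forall x, A x -> differentiable F x) /\
  (forall x, A x -> forall e : R, 0 < e -> exists2 d : R, 0 < d &
     forall y, A y -> `|y - x| < d ->
       opnorm (fun u => 'd F y u - 'd F x u) < e).

(* df t is the derivative of f at t relative to the set A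
   (one-sided at boundary points of A, e.g. at 0 for A = [0,R)). *)
Definition has_derivative_within (A : set R) (f : R -> R) (t dft : R) : Prop :=
  (fun v => (f v - f t) / (v - t)) @ within (A `\ t) (nbhs t) --> dft.

Definition E_F (X Y : normedModType R) (F : X -> Y) (y x : X) : Y :=
  F y - (F x + 'd F x (y - x)).

Definition e_f (f df : R -> R) (v t : R) : R :=
  f v - (f t + df t * (v - t)).

End Defs.

From HB Require Import structures.
From mathcomp Require Import all_boot all_order all_algebra.
From mathcomp Require Import all_classical all_reals all_analysis.
From mathcomp Require Import ring lra.
Set Implicit Arguments. Unset Strict Implicit. Unset Printing Implicit Defensive.
Import Order.TTheory GRing.Theory Num.Theory.
Import numFieldNormedType.Exports.
Local Open Scope classical_set_scope.
Local Open Scope ring_scope.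

(* Instead of the integral formula for [E_F], we compare along the segment
   [z tau = x + tau (y - x)]: the majorant condition and the convexity of [f']
   bound the local Lipschitz constant of [tau |-> |F'(x0)^-1 E_F(z tau, x)|] by
   [|y - x| (f'(t + tau |y - x|) - f'(t))], and a real mean value inequality
   (a "creeping" sup argument) lets any function whose derivative dominates this
   rate bound the error at [tau = 1].  The function
   [tau |-> f(t + tau s) - tau s f'(t)] yields [e_f(t + s, t)]; by the chord
   inequality for the convex [f'], the quadratic
   [tau |-> (f'(s + t) - f'(t)) / (2 s) |y - x|^2 tau^2] yields the second bound. *)

Section RealComparison.
Variable K : realType.

Lemma right_dini_nonpos_le (a b : K) (g : K -> K) : a <= b ->
  (forall tau, a < tau -> tau <= b -> forall eta, 0 < eta -> exists2 d, 0 < d &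
     forall sg, a <= sg -> tau - d < sg -> sg <= tau -> g tau - g sg < eta) ->
  (forall tau, a <= tau -> tau < b -> forall eps, 0 < eps -> exists2 d, 0 < d &
     forall sg, tau < sg -> sg < tau + d -> g sg - g tau <= eps * (sg - tau)) ->
  g b <= g a.
Proof.
move=> ab g_left g_right.
suff slack : forall eps, 0 < eps -> g b <= g a + eps * (b - a).
  apply/ler_addgt0Pr => e e0.
  have ba1 : 0 < b - a + 1 by lra.
  have := slack (e / (b - a + 1)) (divr_gt0 e0 ba1).
  have : e / (b - a + 1) * (b - a) <= e.
    by rewrite mulrAC ler_pdivrMr // ler_pM2l //; lra.
  lra.
move=> eps eps0.
(* [m] is the sup of the points up to which [g] stays below the line of slope [eps]. *)
pose w t := g t - g a - eps * (t - a).
pose A := [set t | a <= t <= b /\ w t <= 0].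
have Aa : A a by split; [rewrite lexx ab | rewrite /w !subrr mulr0 subr0].
have supA : has_sup A by split; [exists a | exists b => t [/andP[_ ->]]].
set m := sup A.
have am : a <= m by apply: sup_upper_bound.
have mb : m <= b by apply: ge_sup; [exists a | move=> t [/andP[_ ->]]].
have wm : w m <= 0.
  have [->|ma] := eqVneq m a; first by rewrite /w !subrr mulr0 subr0.
  have am' : a < m by rewrite lt_neqAle eq_sym ma am.
  rewrite leNgt; apply/negP => wm0.
  have [d d0 Hd] := g_left m am' mb (w m / 2) (divr_gt0 wm0 (ltr0Sn _ 1)).
  have [sg Asg lsg] := sup_adherent d0 supA.
  move: (Asg) => [/andP[asg _] wsg].
  have sgm : sg <= m := sup_upper_bound supA Asg.
  have := Hd sg asg lsg sgm.
  have : 0 <= eps * (m - sg) by rewrite mulr_ge0 ?subr_ge0 // ltW.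
  rewrite /w in wsg wm0 *; lra.
suff <- : m = b by move: wm; rewrite /w; lra.
apply/eqP; rewrite eq_le mb /= leNgt; apply/negP => mlb.
have [d d0 Hd] := g_right m am mlb eps eps0.
pose c := Num.min d (b - m) / 2.
have c0 : 0 < c by rewrite divr_gt0 // lt_min d0 subr_gt0 mlb.
have cd : c < d by rewrite /c; have := ge_min d d (b - m); rewrite lexx /=; lra.
have cb : c <= b - m.
  by rewrite /c; have := ge_min (b - m) d (b - m); rewrite lexx orbT /=; lra.
have : A (m + c).
  split; first by apply/andP; split; lra.
  have := Hd (m + c) ltac:(lra) ltac:(lra); move: wm; rewrite /w; lra.
by move=> /(sup_upper_bound supA); rewrite -/m; lra.
Qed.

Definition tangent_within (A : set K) (g : K -> K) (p l : K) : Prop :=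
  forall eps, 0 < eps -> exists2 d, 0 < d &
    forall v, A v -> `|v - p| < d -> `|g v - g p - l * (v - p)| <= eps * `|v - p|.

Definition local_lipschitz_le (u : K -> K) (tau c : K) : Prop :=
  forall eps, 0 < eps -> exists2 d, 0 < d &
    forall r, `|r| < d -> `|u (tau + r) - u tau| <= `|r| * (c + eps).

Lemma has_derivative_within_tangent (A : set K) (g : K -> K) (p l : K) :
  has_derivative_within A g p l -> tangent_within A g p l.
Proof.
move=> gl eps eps0.
have := @cvgr_dist_lt _ _ _ _ (within_filter _ _) _ _ gl eps eps0.
rewrite /within => /(_ (nbhs_filter p)) near_p.
have [d /= d0 Hd] := (nbhs_normP _ _).1 near_p.
exists d => // v Av vd.
have [->|vp] := eqVneq v p; first by rewrite !subrr mulr0 subrr normr0 mulr0.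
have vp0 : v - p != 0 by rewrite subr_eq0.
have -> : g v - g p - l * (v - p) = ((g v - g p) / (v - p) - l) * (v - p).
  by rewrite mulrBl divfK.
rewrite normrM ler_wpM2r // distrC ltW //.
by apply: Hd; [rewrite /ball_ /= distrC | split => // /eqP; rewrite (negbTE vp)].
Qed.

Lemma tangent_within_sub (A B : set K) (g : K -> K) (p l : K) :
  B `<=` A -> tangent_within A g p l -> tangent_within B g p l.
Proof.
by move=> BA gl eps /gl [d d0 Hd]; exists d => // v /BA; apply: Hd.
Qed.

Lemma tangent_within_affine (A : set K) (g : K -> K) (a s p l : K) :
  tangent_within A g (a + p * s) l ->
  tangent_within [set v | A (a + v * s)] (fun v => g (a + v * s)) p (s * l).
Proof.
move=> gl eps eps0.
have s1 : 0 < `|s| + 1 by have := normr_ge0 s; lra.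
have [d d0 Hd] := gl _ (divr_gt0 eps0 s1).
exists (d / (`|s| + 1)); first by rewrite divr_gt0.
move=> v Av vd.
have shift : a + v * s - (a + p * s) = (v - p) * s by ring.
have vd' : `|v - p| * `|s| < d.
  move: vd; rewrite ltr_pdivlMr // => vd; apply: le_lt_trans vd.
  by rewrite ler_wpM2l //; lra.
have := Hd _ Av; rewrite shift normrM => /(_ vd').
have -> : l * ((v - p) * s) = s * l * (v - p) by ring.
move/le_trans; apply.
have -> : eps / (`|s| + 1) * (`|v - p| * `|s|) = eps * `|v - p| * (`|s| / (`|s| + 1)).
  by ring.
apply: ler_piMr; first by rewrite mulr_ge0 // ltW.
by rewrite ler_pdivrMr // mul1r; lra.
Qed.

Lemma tangent_withinDl (A : set K) (g : K -> K) (p l c : K) :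
  tangent_within A g p l ->
  tangent_within A (fun v => g v + c * v) p (l + c).
Proof.
move=> gl eps /gl [d d0 Hd]; exists d => // v Av vd.
have -> : g v + c * v - (g p + c * p) - (l + c) * (v - p) = g v - g p - l * (v - p).
  by ring.
exact: Hd.
Qed.

Lemma tangent_within_sqr (A : set K) (c p : K) :
  tangent_within A (fun v => c * v ^+ 2) p (2 * c * p).
Proof.
move=> eps eps0.
have c1 : 0 < `|c| + 1 by have := normr_ge0 c; lra.
exists (eps / (`|c| + 1)); first by rewrite divr_gt0.
move=> v _ vd.
have -> : c * v ^+ 2 - c * p ^+ 2 - 2 * c * p * (v - p) = c * (v - p) * (v - p).
  by ring.
rewrite !normrM ler_wpM2r //.
apply: (le_trans (y := (`|c| + 1) * `|v - p|)); first by rewrite ler_wpM2r //; lra.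
by rewrite mulrC -ler_pdivlMr // ltW.
Qed.

Lemma mean_value_ineq (u v b beta : K -> K) :
  (forall tau, 0 <= tau <= 1 -> local_lipschitz_le u tau (b tau)) ->
  (forall tau, 0 <= tau <= 1 ->
     tangent_within [set sg | 0 <= sg <= 1] v tau (beta tau)) ->
  (forall tau, 0 <= tau <= 1 -> b tau <= beta tau) ->
  u 1 - u 0 <= v 1 - v 0.
Proof.
move=> ulip vtan bbeta.
suff : u 1 - v 1 <= u 0 - v 0 by lra.
apply: (@right_dini_nonpos_le 0 1 (fun t => u t - v t) ler01) => /=.
- move=> tau t0 t1 eta eta0.
  have tt : 0 <= tau <= 1 by apply/andP; split; lra.
  have [d1 d10 Hu] := ulip tau tt 1 ltr01.
  have [d2 d20 Hv] := vtan tau tt 1 ltr01.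
  pose c := `|b tau| + `|beta tau| + 2.
  have c0 : 0 < c by rewrite /c; have := normr_ge0 (b tau); have := normr_ge0 (beta tau); lra.
  exists (Num.min (Num.min d1 d2) (eta / c)).
    by rewrite !lt_min d10 d20 divr_gt0.
  move=> sg sg0 lsg sgt.
  have : tau - sg < Num.min (Num.min d1 d2) (eta / c) by lra.
  rewrite !lt_min => /andP[/andP[sd1 sd2] sde].
  have n_eq : `|sg - tau| = tau - sg by rewrite ler0_norm ?subr_le0 // opprB.
  have := Hu (sg - tau); rewrite n_eq subrKC distrC => /(_ ltac:(lra)) Hu1.
  have := Hv sg ltac:(apply/andP; split; lra); rewrite n_eq => /(_ ltac:(lra)) Hv1.
  have := ler_norm (u tau - u sg).
  have : (tau - sg) * b tau <= (tau - sg) * `|b tau|.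
    by rewrite ler_wpM2l ?subr_ge0 // ler_norm.
  have := ler_norm (v sg - v tau - beta tau * (sg - tau)).
  have := ler_norm (beta tau * (sg - tau)); rewrite normrM n_eq.
  have : (tau - sg) * c < eta by rewrite -ltr_pdivlMr //; lra.
  rewrite /c; lra.
- move=> tau t0 t1 eps eps0.
  have tt : 0 <= tau <= 1 by apply/andP; split; lra.
  have [d1 d10 Hu] := ulip tau tt (eps / 2) ltac:(lra).
  have [d2 d20 Hv] := vtan tau tt (eps / 2) ltac:(lra).
  exists (Num.min (Num.min d1 d2) (1 - tau)).
    by rewrite !lt_min d10 d20 subr_gt0.
  move=> sg tsg sgd.
  have : sg - tau < Num.min (Num.min d1 d2) (1 - tau) by lra.
  rewrite !lt_min => /andP[/andP[sd1 sd2] sd3].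
  have n_eq : `|sg - tau| = sg - tau by rewrite gtr0_norm // subr_gt0.
  have := Hu (sg - tau); rewrite n_eq subrKC => /(_ sd1) Hu1.
  have := Hv sg ltac:(apply/andP; split; lra); rewrite n_eq => /(_ sd2) Hv1.
  have := ler_norm (u sg - u tau).
  have := ler_norm (- (v sg - v tau - beta tau * (sg - tau))); rewrite normrN.
  have : (sg - tau) * b tau <= (sg - tau) * beta tau.
    by rewrite ler_wpM2l ?bbeta // subr_ge0 ltW.
  lra.
Qed.

End RealComparison.

Section ConvexIncreasing.
Variables (K : realType) (Rr : K) (g : K -> K).
Hypothesis g_incr : forall a b, 0 <= a -> a < b -> b < Rr -> g a < g b.
Hypothesis g_convex : forall a b l, 0 <= a < Rr -> 0 <= b < Rr -> 0 <= l <= 1 ->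
  g (l * a + (1 - l) * b) <= l * g a + (1 - l) * g b.

Lemma increasing_le a b : 0 <= a -> a <= b -> b < Rr -> g a <= g b.
Proof.
move=> a0 ab bR; have [->|nab] := eqVneq a b; first by [].
by apply/ltW/g_incr => //; rewrite lt_neqAle nab ab.
Qed.

Lemma convex_three_point p q r : 0 <= p -> p <= q -> q <= r -> r < Rr ->
  (r - p) * g q <= (r - q) * g p + (q - p) * g r.
Proof.
move=> p0 pq qr rR.
have [rp|rp] := eqVneq r p.
  have qp : q = p by apply/eqP; rewrite eq_le pq andbT -rp.
  by rewrite rp qp !subrr !mul0r addr0.
have rp0 : 0 < r - p by rewrite subr_gt0 lt_neqAle eq_sym rp (le_trans pq qr).
pose l := (r - q) / (r - p).
have l01 : 0 <= l <= 1.
  apply/andP; split; first by apply: divr_ge0; lra.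
  by rewrite ler_pdivrMr // mul1r; lra.
have hq : l * p + (1 - l) * r = q.
  by rewrite /l; field; rewrite gt_eqF.
have combination : (r - p) * (l * g p + (1 - l) * g r) = (r - q) * g p + (q - p) * g r.
  by rewrite /l; field; rewrite gt_eqF.
rewrite -combination ler_pM2l // -{1}hq.
by apply: g_convex => //; apply/andP; split; lra.
Qed.

Lemma convex_increment_le a t d : 0 <= a -> a <= t -> 0 <= d -> t + d < Rr ->
  g (a + d) - g a <= g (t + d) - g t.
Proof.
move=> a0 at' d0 tdR.
have [td0|tdn] := eqVneq (t + d - a) 0.
  have -> : d = 0 by lra.
  by have -> : t = a by lra.
have tda : 0 < t + d - a by rewrite lt_neqAle eq_sym tdn /=; lra.
have := @convex_three_point a (a + d) (t + d) a0 ltac:(lra) ltac:(lra) tdR.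
have := @convex_three_point a t (t + d) a0 at' ltac:(lra) tdR.
have -> : t + d - (a + d) = t - a by ring.
have -> : a + d - a = d by ring.
have -> : t + d - t = d by ring.
move=> convex_at_t convex_at_ad; rewrite -subr_ge0 -(pmulr_rge0 _ tda); nra.
Qed.

Lemma convex_chord_le t d s : 0 <= t -> 0 <= d -> d <= s -> 0 < s -> t + s < Rr ->
  g (t + d) - g t <= d * ((g (t + s) - g t) / s).
Proof.
move=> t0 d0 ds s0 tsR.
have := @convex_three_point t (t + d) (t + s) t0 ltac:(lra) ltac:(lra) tsR.
have -> : t + s - t = s by ring.
have -> : t + s - (t + d) = s - d by ring.
have -> : t + d - t = d by ring.
by rewrite mulrA ler_pdivlMr //; nra.
Qed.

Lemma increment_scaled_le t n s tau : 0 <= t -> 0 <= n -> n <= s -> t + s < Rr ->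
  0 <= tau <= 1 -> n * (g (t + tau * n) - g t) <= s * (g (t + tau * s) - g t).
Proof.
move=> t0 n0 ns tsR /andP[tau0 tau1].
have taun : tau * n <= tau * s by rewrite ler_wpM2l.
have taus : tau * s <= s by rewrite -[leRHS]mul1r ler_wpM2r //; lra.
have taun0 : 0 <= tau * n by rewrite mulr_ge0.
have inc0 : g t <= g (t + tau * n) by apply: increasing_le => //; lra.
have inc1 : g (t + tau * n) <= g (t + tau * s) by apply: increasing_le; lra.
apply: (le_trans (y := s * (g (t + tau * n) - g t))).
  by apply: ler_wpM2r; rewrite ?subr_ge0.
by apply: ler_wpM2l; [lra | rewrite lerD2r].
Qed.

Lemma increment_chord_le t n s tau : 0 <= t -> 0 <= n -> n <= s -> 0 < s -> t + s < Rr ->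
  0 <= tau <= 1 -> n * (g (t + tau * n) - g t) <= tau * ((g (t + s) - g t) / s) * n ^+ 2.
Proof.
move=> t0 n0 ns s0 tsR /andP[tau0 tau1].
have taun : tau * n <= s by rewrite -[s]mul1r ler_pM.
have chord := convex_chord_le t0 (mulr_ge0 tau0 n0) taun s0 tsR.
have -> : tau * ((g (t + s) - g t) / s) * n ^+ 2 =
          n * (tau * n * ((g (t + s) - g t) / s)) by ring.
exact: ler_wpM2l n0 _ _ chord.
Qed.

End ConvexIncreasing.

Section NormedBounds.
Variables (K : realType) (X Y : normedModType K).

Lemma linear_continuous_bound (L : {linear X -> Y}) : continuous L ->
  exists2 M : K, 0 < M & forall u, `|L u| <= M * `|u|.
Proof.
move=> /linear_bounded_continuous /linear_boundedP /pinfty_ex_gt0 [M M0 HM].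
by exists M.
Qed.

Lemma normr_le_opnorm (L : X -> Y) : scalable L ->
  (exists B : K, forall u, `|L u| <= B * `|u|) ->
  forall u, `|L u| <= opnorm L * `|u|.
Proof.
move=> LZ [B HB] u.
have L0 : L 0 = 0 by rewrite -(scale0r (0 : X)) LZ scale0r.
set S := [set `|L v| | v in [set v : X | `|v| <= 1]].
have supS : has_sup S.
  split; first by exists `|L 0|; exists 0 => //=; rewrite normr0.
  exists `|B| => _ [v /= v1 <-].
  apply: (le_trans (HB v)); apply: (le_trans (ler_wpM2r (normr_ge0 v) (ler_norm B))).
  by rewrite -[leRHS]mulr1 ler_wpM2l.
have [->|u0] := eqVneq u 0; first by rewrite L0 !normr0 mulr0.
have nu : 0 < `|u| by rewrite normr_gt0.
have : S `|L (`|u|^-1 *: u)|.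
  by exists (`|u|^-1 *: u) => //=; rewrite normrZ ger0_norm ?invr_ge0 // mulVf ?gt_eqF.
move=> /(sup_upper_bound supS).
by rewrite LZ normrZ ger0_norm ?invr_ge0 // ler_pdivrMl // mulrC.
Qed.

Lemma differentiable_E_F_small (F : X -> Y) (z : X) : differentiable F z ->
  forall e : K, 0 < e -> exists2 d : K, 0 < d &
    forall k : X, `|k| < d -> `|E_F F (z + k) z| <= e * `|k|.
Proof.
move=> /diff_locallyxC + e e0.
set o := (X in forall k, _ = _ + X k) => expand.
have /nbhs_norm0P [d d0 Hd] := littleoP o e0.
exists d => // k kd.
by rewrite /E_F [z + k - z]addrC addKr expand addrC addKr; apply: Hd.
Qed.

Lemma E_F_increment (F : X -> Y) (x z k : X) :
  E_F F (z + k) x - E_F F z x = E_F F (z + k) z + ('d F z k - 'd F x k).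
Proof.
rewrite /E_F.
have -> : z + k - x = (z - x) + k by rewrite addrAC.
rewrite (linearD ('d F x)) [z + k - z]addrC addKr !opprD !opprK.
rewrite (addrC (- F x)) (addrC _ (F x + _)) -!addrA; congr (_ + _).
by rewrite addKr (addrCA (- 'd F x k)) !addKr addrC.
Qed.

End NormedBounds.

Section LinearizationError.
Variables (K : realType) (X Y : normedModType K) (F : X -> Y) (L : {linear Y -> X}).
Variables (x h : X) (omega : K -> K).
Hypothesis L_cont : continuous L.
Hypothesis F_diff : forall tau, 0 <= tau <= 1 -> differentiable F (x + tau *: h).
Hypothesis omega_bound : forall tau, 0 <= tau <= 1 ->
  opnorm (fun u => L ('d F (x + tau *: h) u - 'd F x u)) <= omega tau.

Lemma linearization_error_lipschitz tau : 0 <= tau <= 1 ->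
  local_lipschitz_le (fun sg => `|L (E_F F (x + sg *: h) x)|) tau (`|h| * omega tau).
Proof.
move=> tau01 eps eps0.
set z := x + tau *: h.
have [M M0 HM] := linear_continuous_bound L_cont.
have dFx : differentiable F x.
  by have := F_diff (tau := 0); rewrite scale0r addr0; apply; rewrite lexx ler01.
have dFz : differentiable F z := F_diff tau01.
have h1 : 0 < `|h| + 1 by have := normr_ge0 h; lra.
have [d d0 Hd] := differentiable_E_F_small dFz (divr_gt0 eps0 (mulr_gt0 M0 h1)).
exists (d / (`|h| + 1)); first by rewrite divr_gt0.
move=> r rd.
have rhd : `|r *: h| < d.
  rewrite normrZ; move: rd; rewrite ltr_pdivlMr // => rd.
  by apply: le_lt_trans rd; rewrite ler_wpM2l //; lra.
have -> : x + (tau + r) *: h = z + r *: h by rewrite scalerDl addrA.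
apply: le_trans (ler_dist_dist _ _) _.
rewrite -linearB E_F_increment linearD.
apply: le_trans (ler_normD _ _) _.
rewrite mulrDr addrC; apply: lerD.
- rewrite (linearZZ ('d F z)) (linearZZ ('d F x)) -scalerBr linearZZ normrZ.
  apply: ler_wpM2l => //.
  have dFz_bound := linear_continuous_bound (diff_continuous dFz).
  have dFx_bound := linear_continuous_bound (diff_continuous dFx).
  have var_bound : exists B, forall u, `|L ('d F z u - 'd F x u)| <= B * `|u|.
    have [[Mz _ Hz] [Mx _ Hx]] := (dFz_bound, dFx_bound).
    exists (M * (Mz + Mx)) => u; apply: le_trans (HM _) _.
    rewrite -mulrA; apply: ler_wpM2l; first exact: ltW.
    by rewrite mulrDl; apply: le_trans (ler_normB _ _) _; apply: lerD.
  have var_scalable : scalable (fun u => L ('d F z u - 'd F x u)).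
    by move=> c u; rewrite (linearZZ ('d F z)) (linearZZ ('d F x)) -scalerBr linearZZ.
  apply: le_trans (normr_le_opnorm var_scalable var_bound h) _.
  by rewrite mulrC; apply: ler_wpM2l => //; apply: omega_bound.
- apply: le_trans (HM _) _; apply: le_trans (ler_wpM2l (ltW M0) (Hd _ rhd)) _.
  rewrite normrZ.
  have -> : M * (eps / (M * (`|h| + 1)) * (`|r| * `|h|)) =
            `|r| * eps * (`|h| / (`|h| + 1)).
    by field; rewrite !gt_eqF.
  apply: ler_piMr; first by rewrite mulr_ge0 // ltW.
  by rewrite ler_pdivrMr // mul1r; lra.
Qed.

Lemma linearization_error_le (v beta : K -> K) :
  (forall tau, 0 <= tau <= 1 ->
     tangent_within [set sg | 0 <= sg <= 1] v tau (beta tau)) ->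
  (forall tau, 0 <= tau <= 1 -> `|h| * omega tau <= beta tau) ->
  `|L (E_F F (x + h) x)| <= v 1 - v 0.
Proof.
move=> vtan hbeta.
have := mean_value_ineq linearization_error_lipschitz vtan hbeta.
rewrite scale0r scale1r addr0.
have -> : E_F F x x = 0 by rewrite /E_F subrr linear0 addr0 subrr.
by rewrite linear0 normr0 subr0.
Qed.

End LinearizationError.

Section Segment.
Variables (K : realType) (X : normedModType K) (Rr t s : K) (x0 x h : X).
Hypotheses (hx : `|x - x0| <= t) (hh : `|h| <= s) (hst : s + t < Rr).

Lemma segment_step_le tau : 0 <= tau <= 1 -> tau * `|h| <= s.
Proof. by case/andP=> t0 t1; rewrite -[s]mul1r ler_pM. Qed.

Lemma segment_in_ball tau : 0 <= tau <= 1 -> ball x0 Rr (x + tau *: h).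
Proof.
move=> tau01; have := segment_step_le tau01; case/andP: tau01 => t0 _ ths.
rewrite -ball_normE /ball_ /= distrC addrAC.
apply: le_lt_trans (ler_normD _ _) _; rewrite normrZ ger0_norm //.
by apply: le_lt_trans (lerD hx ths) _; rewrite addrC.
Qed.

Variables (Y : normedModType K) (F : X -> Y) (Finv : Y -> X) (df : K -> K).
Hypothesis majorant : forall p q : X, ball x0 Rr p -> ball x0 Rr q ->
  `|p - x0| + `|q - p| < Rr ->
  opnorm (fun u => Finv ('d F q u - 'd F p u)) <= df (`|q - p| + `|p - x0|) - df `|p - x0|.
Hypothesis df_convex : forall a b l, 0 <= a < Rr -> 0 <= b < Rr -> 0 <= l <= 1 ->
  df (l * a + (1 - l) * b) <= l * df a + (1 - l) * df b.

Lemma majorant_segment_le tau : 0 <= tau <= 1 ->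
  opnorm (fun u => Finv ('d F (x + tau *: h) u - 'd F x u)) <= df (t + tau * `|h|) - df t.
Proof.
move=> tau01; have := segment_step_le tau01; case/andP: (tau01) => t0 _ ths.
have step : `|x - x0| + tau * `|h| < Rr.
  by apply: le_lt_trans (lerD hx ths) _; rewrite addrC.
have x_in : ball x0 Rr x.
  by have := segment_in_ball (tau := 0); rewrite scale0r addr0; apply; rewrite lexx ler01.
have := majorant x_in (segment_in_ball tau01).
rewrite [x + _ - x]addrC addKr normrZ ger0_norm // => /(_ step) /le_trans; apply.
rewrite (addrC _ `|_|).
apply: (convex_increment_le df_convex) => //; first exact: mulr_ge0.
by rewrite addrC; apply: le_lt_trans hst; rewrite lerD2r.
Qed.

End Segment.

Lemma chord_error_tangent (K : realType) (Rr t s : K) (f df : K -> K) :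
  (forall p, 0 <= p < Rr -> has_derivative_within [set v | 0 <= v < Rr] f p (df p)) ->
  0 <= t -> 0 <= s -> t + s < Rr -> forall tau, 0 <= tau <= 1 ->
  tangent_within [set sg | 0 <= sg <= 1] (fun sg => f (t + sg * s) + - (s * df t) * sg)
    tau (s * df (t + tau * s) + - (s * df t)).
Proof.
move=> f_der t0 s0 tsR tau tau01.
have in_dom sg : 0 <= sg <= 1 -> 0 <= t + sg * s < Rr.
  case/andP=> sg0 sg1; have : sg * s <= s by rewrite -[leRHS]mul1r ler_wpM2r.
  have : 0 <= sg * s by rewrite mulr_ge0.
  by move=> ? ?; apply/andP; split; lra.
apply: tangent_withinDl; apply: (tangent_within_sub (A := [set v | 0 <= t + v * s < Rr])).
  by move=> sg /in_dom.
apply: (tangent_within_affine (A := [set v | 0 <= v < Rr])).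
exact/has_derivative_within_tangent/f_der/in_dom.
Qed.

Theorem corollary3p4
  (K : realType) (X Y : completeNormedModType K)
  (Rr : K) (C : set X) (F : X -> Y) (x0 : X)
  (Finv : Y -> X) (f df : K -> K)
  (HFcont : {within C, continuous F})
  (HFC1 : C1_on (interior C) F)
  (Hx0 : interior C x0)
  (HinvL : cancel ('d F x0) Finv)
  (HinvR : cancel Finv ('d F x0))
  (HinvC : continuous Finv)
  (Hfder : forall t, 0 <= t < Rr -> has_derivative_within [set v | 0 <= v < Rr] f t (df t))
  (Hdfcont : {within [set v | 0 <= v < Rr], continuous df})
  (HB : ball x0 Rr `<=` C)
  (Hmaj : forall x y : X, ball x0 Rr x -> ball x0 Rr y ->
     `|x - x0| + `|y - x| < Rr ->
     opnorm (fun u => Finv ('d F y u - 'd F x u))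
       <= df (`|y - x| + `|x - x0|) - df `|x - x0|)
  (HF0 : `|Finv (F x0)| <= f 0)
  (h1a : 0 < f 0) (h1b : df 0 = -1)
  (h2inc : forall a b, 0 <= a -> a < b -> b < Rr -> df a < df b)
  (h2cvx : forall a b l, 0 <= a < Rr -> 0 <= b < Rr -> 0 <= l <= 1 ->
     df (l * a + (1 - l) * b) <= l * df a + (1 - l) * df b)
  (h3 : exists2 t, 0 < t < Rr & f t < 0) :
  forall (x y : X) (s t : K), 0 <= s -> 0 <= t ->
    `|x - x0| <= t -> `|y - x| <= s -> s + t < Rr ->
    `|Finv (E_F F y x)| <= e_f f df (t + s) t /\
    (s != 0 -> `|Finv (E_F F y x)| <= 2^-1 * ((df (s + t) - df t) / s) * `|y - x| ^+ 2).
Proof.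
move=> x y s t s0 t0 hx hy hst.
have Finv_linear : linear Finv.
  by move=> a u v; rewrite -{1}[u]HinvR -{1}[v]HinvR -linearP HinvL.
pose L : {linear Y -> X} := HB.pack Finv (GRing.isLinear.Build _ _ _ _ Finv Finv_linear).
have tsR : t + s < Rr by rewrite addrC.
have ball_int : ball x0 Rr `<=` interior C by rewrite -open_subsetE //; exact: ball_open.
have F_diff tau : 0 <= tau <= 1 -> differentiable F (x + tau *: (y - x)).
  by move=> /(segment_in_ball hx hy hst) /ball_int /HFC1.1.
have omega_bound := majorant_segment_le hx hy hst Hmaj h2cvx.
have := linearization_error_le (L := L) HinvC F_diff omega_bound.
rewrite subrKC => err_le; split.
- apply: le_trans (err_le _ _ (chord_error_tangent Hfder t0 s0 tsR) _) _.
    move=> tau tau01; rewrite -mulrBr.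
    by apply: (increment_scaled_le h2inc).
  by rewrite mul1r mul0r addr0 mulr1 mulr0 addr0 /e_f; lra.
- move=> s_neq0; have s_pos : 0 < s by rewrite lt0r s_neq0.
  pose c := 2^-1 * ((df (s + t) - df t) / s) * `|y - x| ^+ 2.
  have c_tangent tau : 0 <= tau <= 1 ->
      tangent_within [set sg | 0 <= sg <= 1] (fun sg => c * sg ^+ 2) tau (2 * c * tau).
    by move=> _; apply: tangent_within_sqr.
  apply: le_trans (err_le _ _ c_tangent _) _.
    move=> tau tau01; rewrite /c (addrC s t).
    apply: le_trans (increment_chord_le h2cvx t0 (normr_ge0 _) hy s_pos tsR tau01) _.
    by rewrite mulrA mulrA mulfV ?pnatr_eq0 // mul1r [leRHS]mulrC !mulrA.
  by rewrite expr1n expr0n mulr1 mulr0 subr0.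
Qed.
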